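(* Let $\mathcal H\subseteq\mathcal S_+^d$ be a well-structured preconditioner set. Then for every $y\in\mathbb R^d$, $$\|y\|_{\mathcal H,*}=\inf_{H\in\mathcal H\cap\mathcal S^d_{++},\ \operatorname{Tr}(H)\le 1}\|y\|_{H,*}=\inf_{H\in\mathcal H\cap\mathcal S^d_{++},\ \operatorname{Tr}(H)\le 1}\|y\|_{H^{-1}},$$ where $\|\cdot\|_{H,*}$ denotes the dual norm of $\|\cdot\|_H$.
   Context: $\mathcal S^d_+$ (resp. $\mathcal S^d_{++}$) denotes the set of real symmetric positive semidefinite (resp. positive definite) $d\times d$ matrices. A set $\mathcal H\subseteq\mathcal S_+^d$ is a well-structured preconditioner set if $\mathcal H=\mathcal S_+^d\cap\mathcal K$ for some set $\mathcal K$ of real $d\times d$ matrices that is closed under scalar multiplication, matrix addition and matrix multiplication and contains the identity $I_d$. For $H\in\mathcal S_+^d$, $\|x\|_H=\sqrt{x^\top Hx}$. The $\mathcal H$-norm is $\|x\|_{\mathcal H}:=\sup_{H\in\mathcal H,\operatorname{Tr}(H)\le 1}\|x\|_H$, and $\|y\|_{\mathcal H,*}:=\sup_{\|x\|_{\mathcal H}\le 1}\langle x,y\rangle$ is its dual norm. *)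

From HB Require Import structures.
From mathcomp Require Import all_boot all_order all_algebra.
From mathcomp Require Import all_classical all_reals ereal.
Set Implicit Arguments. Unset Strict Implicit. Unset Printing Implicit Defensive.
Import Order.TTheory GRing.Theory Num.Theory.
Local Open Scope ring_scope.
Local Open Scope classical_set_scope.

Section Defs.
Variables (R : realType) (d : nat).

Definition qform (A : 'M[R]_d) (x y : 'cV[R]_d) : R := (x^T *m A *m y) ord0 ord0.
Definition inner (x y : 'cV[R]_d) : R := (x^T *m y) ord0 ord0.

Definition symmetric (A : 'M[R]_d) : Prop := A^T = A.
Definition psd (A : 'M[R]_d) : Prop := symmetric A /\ forall x, 0 <= qform A x x.
Definition pd (A : 'M[R]_d) : Prop := symmetric A /\ forall x, x != 0 -> 0 < qform A x x.

Definition well_structured (Hs : set 'M[R]_d) : Prop :=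
  exists K : set 'M[R]_d,
    [/\ (forall (a : R) A, K A -> K (a *: A)),
        (forall A B, K A -> K B -> K (A + B)),
        (forall A B, K A -> K B -> K (A *m B)),
        K 1%:M &
        Hs = [set A | psd A /\ K A]].

Definition Hnorm (H : 'M[R]_d) (x : 'cV[R]_d) : R := Num.sqrt (qform H x x).

Definition setnorm (Hs : set 'M[R]_d) (x : 'cV[R]_d) : \bar R :=
  ereal_sup [set (Hnorm H x)%:E | H in [set H | Hs H /\ \tr H <= 1]].

Definition setnorm_dual (Hs : set 'M[R]_d) (y : 'cV[R]_d) : \bar R :=
  ereal_sup [set (inner x y)%:E | x in [set x | (setnorm Hs x <= 1)%E]].

Definition Hnorm_dual (H : 'M[R]_d) (y : 'cV[R]_d) : \bar R :=
  ereal_sup [set (inner x y)%:E | x in [set x | Hnorm H x <= 1]].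

Definition admissible (Hs : set 'M[R]_d) : set 'M[R]_d :=
  [set H | [/\ Hs H, pd H & \tr H <= 1]].

End Defs.

From Pilot Require Import Defs.
From HB Require Import structures.
From mathcomp Require Import all_boot all_order all_algebra.
From mathcomp Require Import all_classical all_reals ereal.
From mathcomp Require Import ring lra.
Import Defs.
Set Implicit Arguments. Unset Strict Implicit.
Import Order.TTheory GRing.Theory Num.Theory.
Local Open Scope ring_scope.
Local Open Scope classical_set_scope.

(** For admissible [H], Cauchy-Schwarz in the [H]-inner product gives
[<x, y> <= ‖x‖_H ‖y‖_{H^-1}] with equality at [x ∝ H^-1 y]; hence
[‖y‖_{H,*} = ‖y‖_{H^-1} >= ‖y‖_{Hs,*}].  For the converse only the convex-cone
structure of [Hs] matters.  On the convex set of [H ∈ Hs] with [Tr H <= 1] and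
[H ⪰ e I], the function [f H = yᵀ H^-1 y] has a second-order expansion along
segments with a uniformly bounded remainder, so an approximate minimiser [H]
satisfies [zᵀ H' z <= f H + eta] for every competitor [H'], where [z = H^-1 y].
Any [H'] with [Tr H' <= 1] is dominated by the competitor [(1 - d e) H' + e I],
so a suitable multiple of [z] lies in the unit ball of [‖·‖_Hs] while its
pairing with [y] is nearly [sqrt (f H)]. *)

Section QuadraticForms.
Variables (R : realType) (d : nat).
Implicit Types (x y z u v w : 'cV[R]_d) (A B H : 'M[R]_d).

Lemma innerE x y : inner x y = \sum_i x i 0 * y i 0.
Proof. by rewrite /inner mxE; apply: eq_bigr => i _; rewrite mxE. Qed.

Lemma inner_sym x y : inner x y = inner y x.
Proof. by rewrite !innerE; apply: eq_bigr => i _; rewrite mulrC. Qed.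

Lemma innerDr x y z : inner x (y + z) = inner x y + inner x z.
Proof. by rewrite !innerE -big_split; apply: eq_bigr => i _; rewrite mxE mulrDr. Qed.

Lemma innerZr (a : R) x y : inner x (a *: y) = a * inner x y.
Proof. by rewrite !innerE mulr_sumr; apply: eq_bigr => i _; rewrite mxE mulrCA. Qed.

Lemma innerBr x y z : inner x (y - z) = inner x y - inner x z.
Proof. by rewrite innerDr -scaleN1r innerZr mulN1r. Qed.

Lemma innerDl x y z : inner (y + z) x = inner y x + inner z x.
Proof. by rewrite inner_sym innerDr !(inner_sym x). Qed.

Lemma innerZl (a : R) x y : inner (a *: y) x = a * inner y x.
Proof. by rewrite inner_sym innerZr inner_sym. Qed.

Lemma innerBl x y z : inner (y - z) x = inner y x - inner z x.
Proof. by rewrite inner_sym innerBr !(inner_sym x). Qed.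

Lemma inner0l x : inner 0 x = 0.
Proof. by rewrite /inner trmx0 mul0mx mxE. Qed.

Lemma inner_ge0 x : 0 <= inner x x.
Proof. by rewrite innerE sumr_ge0 // => i _; rewrite -expr2 sqr_ge0. Qed.

Lemma inner_eq0 x : (inner x x == 0) = (x == 0).
Proof.
apply/idP/eqP => [|->]; last by rewrite inner0l.
rewrite innerE psumr_eq0 => [/allP x0|i _]; last by rewrite -expr2 sqr_ge0.
apply/matrixP => i j; rewrite (ord1 j) mxE.
by have /implyP/(_ isT) := x0 i (mem_index_enum i); rewrite mulf_eq0 orbb => /eqP.
Qed.

Lemma inner_mulmx A x y : inner x (A *m y) = inner (A^T *m x) y.
Proof. by rewrite /inner trmx_mul trmxK mulmxA. Qed.

Lemma inner_subr_le x y : inner (x - y) (x - y) <= 2 * inner x x + 2 * inner y y.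
Proof.
rewrite !innerBl !innerBr (inner_sym y x).
by have := inner_ge0 (x + y); rewrite !innerDl !innerDr (inner_sym y x); lra.
Qed.

Lemma qformE A x y : qform A x y = inner x (A *m y).
Proof. by rewrite /qform /inner mulmxA. Qed.

Lemma qform_sym A x y : symmetric A -> qform A x y = qform A y x.
Proof. by move=> sA; rewrite !qformE inner_mulmx sA inner_sym. Qed.

Lemma qformZl A (a : R) x y : qform A (a *: x) y = a * qform A x y.
Proof. by rewrite !qformE innerZl. Qed.

Lemma qformZr A (a : R) x y : qform A x (a *: y) = a * qform A x y.
Proof. by rewrite !qformE -scalemxAr innerZr. Qed.

Lemma qformBl A x y z : qform A (x - y) z = qform A x z - qform A y z.
Proof. by rewrite !qformE innerBl. Qed.

Lemma qformBr A x y z : qform A x (y - z) = qform A x y - qform A x z.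
Proof. by rewrite !qformE mulmxBr innerBr. Qed.

Lemma qformDm A B x y : qform (A + B) x y = qform A x y + qform B x y.
Proof. by rewrite !qformE mulmxDl innerDr. Qed.

Lemma qformZm A (a : R) x y : qform (a *: A) x y = a * qform A x y.
Proof. by rewrite !qformE -scalemxAl innerZr. Qed.

Lemma qformBm A B x y : qform (A - B) x y = qform A x y - qform B x y.
Proof. by rewrite !qformE mulmxBl innerBr. Qed.

Lemma qform_scalar (a : R) x y : qform a%:M x y = a * inner x y.
Proof. by rewrite qformE mul_scalar_mx innerZr. Qed.

Lemma qform0r A x : qform A x 0 = 0.
Proof. by rewrite qformE mulmx0 inner_sym inner0l. Qed.

Lemma qform_CS A u v : psd A -> qform A u v ^+ 2 <= qform A u u * qform A v v.
Proof.
case=> sA pA; set a := qform A u u; set b := qform A u v; set c := qform A v v.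
have quad t : 0 <= a - 2 * t * b + t ^+ 2 * c.
  have -> : a - 2 * t * b + t ^+ 2 * c = a - t * b - (t * b - t * (t * c)) by ring.
  have := pA (u - t *: v).
  by rewrite qformBl !qformBr !qformZl !qformZr (qform_sym v u sA).
have [c0|c_neq0] := eqVneq c 0.
  have [b0|b_neq0] := eqVneq b 0; first by rewrite b0 c0 expr0n mulr0.
  have := quad ((a + 1) / (2 * b)); rewrite c0 mulr0 addr0.
  have -> : 2 * ((a + 1) / (2 * b)) * b = a + 1 by field; rewrite b_neq0.
  lra.
have c_gt0 : 0 < c by rewrite lt_def c_neq0 pA.
have := quad (b / c).
have -> : a - 2 * (b / c) * b + (b / c) ^+ 2 * c = (a * c - b ^+ 2) / c.
  by field; rewrite c_neq0.
by rewrite pmulr_lge0 ?invr_gt0 // subr_ge0.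
Qed.

Lemma psd1 : psd (1%:M : 'M[R]_d).
Proof.
split=> [|x]; first by rewrite /symmetric trmx1.
by rewrite qform_scalar mul1r inner_ge0.
Qed.

Lemma inner_CS u v : inner u v ^+ 2 <= inner u u * inner v v.
Proof. by have := qform_CS u v psd1; rewrite !qform_scalar !mul1r. Qed.

Lemma psdZ (a : R) A : 0 <= a -> psd A -> psd (a *: A).
Proof.
move=> a0 [sA pA]; split=> [|x]; first by rewrite /symmetric linearZ /= sA.
by rewrite qformZm mulr_ge0.
Qed.

Lemma psdD A B : psd A -> psd B -> psd (A + B).
Proof.
move=> [sA pA] [sB pB]; split=> [|x]; first by rewrite /symmetric linearD /= sA sB.
by rewrite qformDm addr_ge0.
Qed.

Lemma psd_mul_norm_le A v :
  psd A -> \tr A <= 1 -> inner (A *m v) (A *m v) <= inner v v.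
Proof.
move=> psdA trA; have [sA pA] := psdA.
set W := inner _ _; set q := qform A v v.
have q0 : 0 <= q by apply: pA.
have Wq : W <= q.
  have entryE i : (A *m v) i 0 = qform A (delta_mx i 0) v.
    by rewrite /qform trmx_delta -mulmxA -rowE !mxE.
  have diagE i : qform A (delta_mx i 0) (delta_mx i 0) = A i i.
    by rewrite /qform trmx_delta -rowE -colE !mxE.
  apply: le_trans (_ : \sum_i A i i * q <= _); last first.
    by rewrite -mulr_suml ler_piMl.
  rewrite /W innerE; apply: ler_sum => i _.
  by rewrite entryE -expr2 -diagE qform_CS.
have := inner_CS v (A *m v); rewrite -qformE -/q -/W => CS.
have [q_eq0|q_neq0] := eqVneq q 0; first by rewrite (le_trans Wq) // q_eq0 inner_ge0.
have q_gt0 : 0 < q by rewrite lt_def q_neq0.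
apply: le_trans (Wq) _; rewrite -(ler_pM2l q_gt0) -expr2.
by apply: le_trans CS _; rewrite [q * _]mulrC; apply: ler_wpM2l; rewrite ?inner_ge0.
Qed.


Definition coercive (c : R) A := forall v, c * inner v v <= qform A v v.

Lemma pd_psd H : pd H -> psd H.
Proof.
case=> sH pH; split=> // x; have [->|x_neq0] := eqVneq x 0; first by rewrite qform0r.
exact/ltW/pH.
Qed.

Lemma pd_unitmx H : pd H -> H \in unitmx.
Proof.
case=> sH pH; rewrite unitmxE unitfE; apply/negP => /det0P [v v_neq0 vH].
have vT_neq0 : v^T != 0 by apply: contra v_neq0 => /eqP; rewrite -trmx0 => /trmx_inj ->.
have := pH _ vT_neq0; rewrite qformE -sH -trmx_mul vH trmx0.
by rewrite inner_sym inner0l ltxx.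
Qed.

Lemma coercive_pd c A : symmetric A -> 0 < c -> coercive c A -> pd A.
Proof.
move=> sA c_gt0 cA; split=> // v v_neq0; apply: lt_le_trans (cA v).
by rewrite mulr_gt0 // lt_def inner_eq0 v_neq0 inner_ge0.
Qed.

Lemma symmetric_invmx H : symmetric H -> symmetric (invmx H).
Proof. by move=> sH; rewrite /symmetric trmx_inv sH. Qed.

Lemma qform_invmx H y : H \in unitmx ->
  qform (invmx H) y y = qform H (invmx H *m y) (invmx H *m y).
Proof. by move=> uH; rewrite [RHS]qformE mulKVmx // qformE inner_sym. Qed.

Lemma qform_invmx_ge0 H y : pd H -> 0 <= qform (invmx H) y y.
Proof. by move=> pdH; rewrite qform_invmx ?pd_unitmx //; case: (pd_psd pdH). Qed.

Lemma inner_le_Hnorm H x y : pd H -> inner x y <= Hnorm H x * Hnorm (invmx H) y.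
Proof.
move=> pdH; have [_ pH] := pd_psd pdH.
rewrite /Hnorm -sqrtrM // qform_invmx ?pd_unitmx //.
rewrite -[in inner x y](mulKVmx (pd_unitmx pdH) y) -qformE.
apply: le_trans (ler_norm _) _; rewrite -sqrtr_sqr ler_sqrt ?mulr_ge0 //.
exact/qform_CS/pd_psd.
Qed.

Lemma Hnorm_dualE H y : pd H -> Hnorm_dual H y = (Hnorm (invmx H) y)%:E.
Proof.
move=> pdH; have uH := pd_unitmx pdH; apply/le_anti/andP; split.
  apply: ge_ereal_sup => _ [x /= x_le1 <-]; rewrite lee_fin.
  by apply: le_trans (inner_le_Hnorm x y pdH) _; rewrite ler_piMl ?sqrtr_ge0.
set s := Hnorm (invmx H) y.
have s2 : s ^+ 2 = qform (invmx H) y y by rewrite sqr_sqrtr ?qform_invmx_ge0.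
have [s0|s_neq0] := eqVneq s 0.
  rewrite s0; apply: ereal_sup_ubound; exists 0; last by rewrite /= inner0l.
  by rewrite /= /Hnorm qform0r sqrtr0 ler01.
apply: ereal_sup_ubound; exists (s^-1 *: (invmx H *m y)); last first.
  by rewrite /= innerZl inner_sym -qformE -s2 expr2 mulKf.
rewrite /= /Hnorm qformZl qformZr -qform_invmx // -s2 mulrA -expr2 exprVn.
by rewrite mulVf ?sqrtr1 ?expf_neq0.
Qed.

Lemma qform_invmx_le c B w : pd B -> 0 < c -> coercive c B ->
  qform (invmx B) w w <= inner w w / c.
Proof.
move=> pdB c_gt0 cB; rewrite ler_pdivlMr //.
have := cB (invmx B *m w); rewrite -qform_invmx ?pd_unitmx // => lb.
have := inner_CS w (invmx B *m w); rewrite -qformE => CS.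
move: lb CS; set p := qform _ w w; set V := inner _ _ => lb CS.
have [->|p_neq0] := eqVneq p 0; first by rewrite mul0r inner_ge0.
have p_gt0 : 0 < p by rewrite lt_def p_neq0 (le_trans _ lb) ?mulr_ge0 ?inner_ge0 ?ltW.
by rewrite -(ler_pM2l p_gt0); have := inner_ge0 w; nra.
Qed.

Lemma invmx_mul_norm_le c H y : pd H -> 0 < c -> coercive c H ->
  inner (invmx H *m y) (invmx H *m y) <= inner y y / c ^+ 2.
Proof.
move=> pdH c_gt0 cH; rewrite ler_pdivlMr ?exprn_gt0 //.
have := cH (invmx H *m y); rewrite qformE mulKVmx ?pd_unitmx // => lb.
have := inner_CS (invmx H *m y) y; move: lb.
set Z := inner (invmx H *m y) _; set p := inner _ y => lb CS.
have [->|Z_neq0] := eqVneq Z 0; first by rewrite mul0r inner_ge0.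
have Z_gt0 : 0 < Z by rewrite lt_def Z_neq0 inner_ge0.
have cZ_ge0 : 0 <= c * Z by rewrite mulr_ge0 ?ltW.
by rewrite -(ler_pM2l Z_gt0); nra.
Qed.

Lemma qform_invmx_perturb H B y : H \in unitmx -> B \in unitmx -> symmetric B ->
  qform (invmx B) y y = qform (invmx H) y y
    - qform (B - H) (invmx H *m y) (invmx H *m y)
    + qform (invmx B) ((B - H) *m (invmx H *m y)) ((B - H) *m (invmx H *m y)).
Proof.
move=> uH uB sB; set a := invmx H *m y; set b := invmx B *m y; set w := (B - H) *m a.
have ab : a - b = invmx B *m w.
  by rewrite /w mulmxBl mulKVmx // -[in RHS](mulKVmx uB y) -mulmxBr mulKmx.
have ybw : inner y a - inner y b = inner b w.
  by rewrite -innerBr ab inner_mulmx (symmetric_invmx sB) inner_sym.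
rewrite !qformE -/a -/b -/w -ab innerBr [inner w a]inner_sym [inner w b]inner_sym.
by move: ybw; lra.
Qed.

End QuadraticForms.

Lemma setnorm0 (R : realType) d (Hs : set 'M[R]_d) : (setnorm Hs 0 <= 1)%E.
Proof.
by apply: ge_ereal_sup => _ [H _ <-]; rewrite lee_fin /Hnorm qform0r sqrtr0 ler01.
Qed.

Lemma setnorm_dual_le_Hnorm_dual (R : realType) d (Hs : set 'M[R]_d) H y :
  Hs H -> \tr H <= 1 -> (setnorm_dual Hs y <= Hnorm_dual H y)%E.
Proof.
move=> HsH trH; apply/ereal_sup_le/image_subset => x /= x_le1.
by rewrite -lee_fin (le_trans _ x_le1) //; apply: ereal_sup_ubound; exists H.
Qed.

Section ConvexCone.
Variables (R : realType) (d : nat) (Hs : set 'M[R]_d).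
Hypotheses (Hs_psd : forall H, Hs H -> psd H)
  (HsZ : forall (a : R) H, 0 <= a -> Hs H -> Hs (a *: H))
  (HsD : forall H H', Hs H -> Hs H' -> Hs (H + H'))
  (Hs1 : Hs 1%:M).

Definition coercive_part (e : R) : set 'M[R]_d :=
  [set H | [/\ Hs H, \tr H <= 1 & coercive e H]].

Lemma coercive_part_pd e H : 0 < e -> coercive_part e H -> pd H.
Proof. by move=> e_gt0 [/Hs_psd[sH _] _ cH]; exact: (coercive_pd sH e_gt0 cH). Qed.

Lemma coercive_part_admissible e H : 0 < e -> coercive_part e H -> admissible Hs H.
Proof.
move=> e_gt0 eH; have [HsH trH _] := eH.
by split=> //; exact: coercive_part_pd e_gt0 eH.
Qed.

Lemma coercive_part_segment e H H' t : 0 <= t <= 1 ->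
  coercive_part e H -> coercive_part e H' -> coercive_part e (H + t *: (H' - H)).
Proof.
move=> /andP[t_ge0 t_le1] [HsH trH cH] [HsH' trH' cH'].
have t'_ge0 : 0 <= 1 - t by rewrite subr_ge0.
have -> : H + t *: (H' - H) = (1 - t) *: H + t *: H'.
  by rewrite scalerBr scalerBl scale1r addrA addrAC.
split; first by apply: HsD; apply: HsZ.
  rewrite mxtraceD !mxtraceZ.
  by have := ler_wpM2l t'_ge0 trH; have := ler_wpM2l t_ge0 trH'; lra.
move=> v; rewrite qformDm !qformZm.
by have := ler_wpM2l t'_ge0 (cH v); have := ler_wpM2l t_ge0 (cH' v); lra.
Qed.

Lemma coercive_part_shrink e H : 0 <= e -> d%:R * e <= 1 -> Hs H -> \tr H <= 1 ->
  coercive_part e ((1 - d%:R * e) *: H + e%:M).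
Proof.
move=> e_ge0 de_le1 HsH trH; have c_ge0 : 0 <= 1 - d%:R * e by rewrite subr_ge0.
split.
- by apply: HsD; [exact: HsZ | rewrite -scalemx1; exact: HsZ].
- rewrite mxtraceD mxtraceZ mxtrace_scalar -mulr_natl.
  by have := ler_wpM2l c_ge0 trH; lra.
- move=> v; rewrite qformDm qformZm qform_scalar.
  by have [_ /(_ v) qH_ge0] := Hs_psd HsH; have := inner_ge0 v; nra.
Qed.

Variable y : 'cV[R]_d.

Lemma coercive_part_second_order_le e H H' B : 0 < e ->
  coercive_part e H -> coercive_part e H' -> coercive_part e B ->
  qform (invmx B) ((H' - H) *m (invmx H *m y)) ((H' - H) *m (invmx H *m y))
    <= 4 * inner y y / e ^+ 3.
Proof.
move=> e_gt0 eH [HsH' trH' _] eB; have [HsH trH cH] := eH; have [_ _ cB] := eB.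
have z_le := invmx_mul_norm_le y (coercive_part_pd e_gt0 eH) e_gt0 cH.
have Hz_le := psd_mul_norm_le (invmx H *m y) (Hs_psd HsH) trH.
have H'z_le := psd_mul_norm_le (invmx H *m y) (Hs_psd HsH') trH'.
apply: le_trans (qform_invmx_le _ (coercive_part_pd e_gt0 eB) e_gt0 cB) _.
have -> : 4 * inner y y / e ^+ 3 = 4 * (inner y y / e ^+ 2) / e.
  by field; rewrite gt_eqF.
rewrite ler_pM2r ?invr_gt0 // mulmxBl; apply: le_trans (inner_subr_le _ _) _.
lra.
Qed.

Lemma coercive_part_first_order e H H' t : 0 < e -> 0 < t <= 1 ->
  coercive_part e H -> coercive_part e H' ->
  t * (qform H' (invmx H *m y) (invmx H *m y) - qform (invmx H) y y)
    <= qform (invmx H) y y - qform (invmx (H + t *: (H' - H))) y y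
       + t ^+ 2 * (4 * inner y y / e ^+ 3).
Proof.
move=> e_gt0 /andP[t_gt0 t_le1] eH eH'.
have t01 : 0 <= t <= 1 by rewrite ltW.
have eB := coercive_part_segment t01 eH eH'.
have pdH := coercive_part_pd e_gt0 eH; have pdB := coercive_part_pd e_gt0 eB.
have uH := pd_unitmx pdH; have [sB _] := pdB.
rewrite (qform_invmx_perturb y uH (pd_unitmx pdB) sB).
have -> : H + t *: (H' - H) - H = t *: (H' - H) by rewrite addrC addKr.
have := coercive_part_second_order_le e_gt0 eH eH' eB.
rewrite -scalemxAl qformZl qformZr qformZm qformBm -qform_invmx //.
by have := sqr_ge0 t; nra.
Qed.

Lemma coercive_part_approx_min e eta : 0 < e -> d%:R * e <= 1 -> 0 < eta ->
  exists2 H, coercive_part e H & forall H', coercive_part e H' ->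
    qform H' (invmx H *m y) (invmx H *m y) <= qform (invmx H) y y + eta.
Proof.
move=> e_gt0 de_le1 eta_gt0.
set E := [set qform (invmx H) y y | H in coercive_part e].
have Hs0 : Hs 0 by rewrite -(scale0r 1%:M); exact: HsZ.
have E_lb : has_lbound E.
  by exists 0 => _ [H eH <-]; exact/qform_invmx_ge0/(coercive_part_pd e_gt0 eH).
have E_inf : has_inf E.
  split=> //; eexists; exists ((1 - d%:R * e) *: 0 + e%:M) => //.
  by apply: coercive_part_shrink => //; [exact: ltW | rewrite mxtrace0].
set K := 4 * inner y y / e ^+ 3.
have K_ge0 : 0 <= K by rewrite divr_ge0 ?exprn_ge0 ?mulr_ge0 ?inner_ge0 // ltW.
have den_gt0 : 0 < 2 * K + eta by lra.
(* The step [t] satisfies [t <= 1] and [t * K <= eta / 2]. *)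
set t := eta / (2 * K + eta).
have t_gt0 : 0 < t by rewrite divr_gt0.
have tE : (2 * K + eta) * t = eta by rewrite mulrC divfK ?gt_eqF.
have t_le1 : t <= 1 by rewrite -(ler_pM2l den_gt0) tE; lra.
have t01 : 0 < t <= 1 by rewrite t_gt0 t_le1.
have delta_gt0 : 0 < t * eta / 2 by rewrite divr_gt0 // mulr_gt0.
have [_ [H eH <-] H_near] := inf_adherent delta_gt0 E_inf.
exists H => // H' eH'.
have := coercive_part_first_order e_gt0 t01 eH eH'.
have : inf E <= qform (invmx (H + t *: (H' - H))) y y.
  apply: ge_inf => //; exists (H + t *: (H' - H)) => //.
  by apply: coercive_part_segment; rewrite ?(ltW t_gt0) ?t_le1.
rewrite -/K -(ler_pM2l t_gt0); nra.
Qed.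

Lemma first_order_setnorm_le1 e eta H : 0 <= e -> d%:R * e <= 1 ->
  0 < qform (invmx H) y y + eta ->
  (forall H', coercive_part e H' ->
     qform H' (invmx H *m y) (invmx H *m y) <= qform (invmx H) y y + eta) ->
  (setnorm Hs
     (Num.sqrt ((1 - d%:R * e) / (qform (invmx H) y y + eta)) *: (invmx H *m y))
   <= 1)%E.
Proof.
move=> e_ge0 de_le1 den_gt0 opt; apply: ge_ereal_sup => _ [H' [HsH' trH'] <-].
have c_ge0 : 0 <= 1 - d%:R * e by rewrite subr_ge0.
rewrite lee_fin /Hnorm -[leRHS]sqrtr1 ler_sqrt // qformZl qformZr mulrA -expr2.
rewrite sqr_sqrtr ?divr_ge0 ?(ltW den_gt0) // mulrAC ler_pdivrMr // mul1r.
have := opt _ (coercive_part_shrink e_ge0 de_le1 HsH' trH').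
rewrite qformDm qformZm qform_scalar.
by have := inner_ge0 (invmx H *m y); nra.
Qed.

Lemma setnorm_dual_witness r a : 0 <= r -> r ^+ 2 < a ->
  (forall H, admissible Hs H -> a <= qform (invmx H) y y) ->
  exists2 x, (setnorm Hs x <= 1)%E & r < inner x y.
Proof.
move=> r_ge0 ra a_le; set b := r ^+ 2 in ra *.
have b_ge0 : 0 <= b by rewrite sqr_ge0.
have a_gt0 : 0 < a by apply: le_lt_trans ra.
have D_gt0 : 0 < d%:R + 1 :> R by rewrite ltr_wpDl.
(* [e] gives [1 - d e >= (a + b) / (2 a)], and [eta] keeps the loss [b * eta]
   below [(a - b) * f / 2]. *)
set e := (a - b) / (2 * a * (d%:R + 1)).
have e_gt0 : 0 < e by rewrite divr_gt0 ?subr_gt0 ?mulr_gt0.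
have de : 2 * a * (d%:R * e) <= a - b.
  have -> : 2 * a * (d%:R * e) = (a - b) * (d%:R / (d%:R + 1)).
    by rewrite /e; field; rewrite !gt_eqF.
  have d_frac : d%:R / (d%:R + 1) <= 1 :> R by rewrite ler_pdivrMr // mul1r lerDl.
  by rewrite ler_piMr // subr_ge0 ltW.
have de_le1 : d%:R * e <= 1 by rewrite -(ler_pM2l (_ : 0 < 2 * a)) ?mulr_gt0 //; lra.
set eta := (a - b) / 4.
have eta_gt0 : 0 < eta by rewrite divr_gt0 ?subr_gt0.
have [H eH opt] := coercive_part_approx_min e_gt0 de_le1 eta_gt0.
have := a_le _ (coercive_part_admissible e_gt0 eH).
move: opt; set f := qform (invmx H) y y => opt a_le_f.
have den_gt0 : 0 < f + eta by lra.
eexists; first exact: first_order_setnorm_le1 (ltW e_gt0) de_le1 den_gt0 opt.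
rewrite innerZl inner_sym -qformE -/f.
have f_ge0 : 0 <= f by lra.
have c_ge0 : 0 <= 1 - d%:R * e by rewrite subr_ge0.
rewrite -(ltr_pXn2r (_ : (0 < 2)%N)) ?nnegrE ?mulr_ge0 ?sqrtr_ge0 //.
rewrite exprMn sqr_sqrtr ?divr_ge0 ?(ltW den_gt0) // mulrAC ltr_pdivlMr //.
have c_ge : a + b <= 2 * a * (1 - d%:R * e) by lra.
have s1 : (a + b) * f <= 2 * a * (1 - d%:R * e) * f by rewrite ler_wpM2r.
have s2 : (1 - d%:R * e) * (a * f) <= (1 - d%:R * e) * f ^+ 2.
  by rewrite ler_wpM2l // expr2 ler_wpM2r.
have s3 : 0 < (a - b) * (2 * f - b) by rewrite mulr_gt0 //; lra.
rewrite -/b /eta; lra.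
Qed.

Lemma inf_le_setnorm_dual :
  (ereal_inf [set (Hnorm (invmx H) y)%:E | H in admissible Hs] <= setnorm_dual Hs y)%E.
Proof.
have : (0 <= setnorm_dual Hs y)%E.
  by apply: ereal_sup_ubound; exists 0; [exact: setnorm0 | rewrite /= inner0l].
case D : setnorm_dual => [r| |] // r_ge0; last by rewrite leey.
apply/lee_addgt0Pr => eps eps_gt0; rewrite lee_fin in r_ge0.
have reps_ge0 : 0 <= r + eps by rewrite addr_ge0 // ltW.
have r_lt : r ^+ 2 < (r + eps) ^+ 2 by rewrite ltr_pXn2r ?nnegrE // ltrDl.
rewrite -EFinD leNgt; apply/negP => lt_inf.
have [x x_le1 r_lt_xy] : exists2 x, (setnorm Hs x <= 1)%E & r < inner x y.
  apply: (setnorm_dual_witness r_ge0 r_lt) => H aH; have [_ pdH _] := aH.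
  rewrite -(sqr_sqrtr (qform_invmx_ge0 y pdH)) ler_pXn2r ?nnegrE ?sqrtr_ge0 //.
  rewrite -lee_fin (le_trans (ltW lt_inf)) //; apply: ereal_inf_lbound; by exists H.
have : ((inner x y)%:E <= r%:E)%E by rewrite -D; apply: ereal_sup_ubound; exists x.
by rewrite lee_fin leNgt r_lt_xy.
Qed.

End ConvexCone.

Lemma well_structured_cone (R : realType) d (Hs : set 'M[R]_d) :
  well_structured Hs ->
  [/\ forall H, Hs H -> psd H,
      forall (a : R) H, 0 <= a -> Hs H -> Hs (a *: H),
      forall H H', Hs H -> Hs H' -> Hs (H + H') & Hs 1%:M].
Proof.
case=> K [KZ KD _ K1 ->]; split.
- by move=> H [].
- by move=> a H a_ge0 [psdH KH]; split; [exact: psdZ | exact: KZ].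
- by move=> H H' [psdH KH] [psdH' KH']; split; [exact: psdD | exact: KD].
- by split; [exact: psd1 | exact: K1].
Qed.

Theorem lemma2p1 (R : realType) (d : nat) (Hs : set 'M[R]_d) :
  well_structured Hs ->
  forall y : 'cV[R]_d,
    setnorm_dual Hs y = ereal_inf [set Hnorm_dual H y | H in admissible Hs] /\
    ereal_inf [set Hnorm_dual H y | H in admissible Hs] =
    ereal_inf [set (Hnorm (invmx H) y)%:E | H in admissible Hs].
Proof.
move=> /well_structured_cone[Hs_psd HsZ HsD Hs1] y.
have dualE : [set Hnorm_dual H y | H in admissible Hs] =
             [set (Hnorm (invmx H) y)%:E | H in admissible Hs].
  by apply: eq_imagel => H [_ pdH _]; exact: Hnorm_dualE.
rewrite dualE; split=> //; apply/le_anti/andP; split.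
- apply/ereal_infP => _ [H [HsH pdH trH] <-].
  by rewrite -Hnorm_dualE //; exact: setnorm_dual_le_Hnorm_dual.
- exact: (inf_le_setnorm_dual Hs_psd HsZ HsD Hs1 y).
Qed.
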